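(* Let $\mathcal{U}$ be any perturbation set, $c:\mathcal{X}\to\mathcal{Y}$ a concept, $D$ a distribution on $\mathcal{X}$, $\beta\in(0,1]$, $\epsilon'\ge0$, and $h_1,\dots,h_T:\mathcal{X}\to\mathcal{Y}$ classifiers. Write $R_t=\mathrm{Rob}_{\mathcal{U}^{-1}(\mathcal{U})}(h_t)$ and $\bar R_{1:t}=\bigcap_{s\le t}(\mathcal{X}\setminus R_s)$ (with $\bar R_{1:0}=\mathcal{X}$). Suppose that for every $1\le t\le T$ with $\Pr_{x\sim D}[\bar R_{1:t-1}]>0$, $$\Pr_{x\sim D}[x\in R_t\mid x\in\bar R_{1:t-1}]\ge\beta\quad\text{and}\quad\Pr_{x\sim D}[h_t(x)\neq c(x)\mid x\in\bar R_{1:t-1}]\le\epsilon'.$$ Then $\Pr_{x\sim D}[\bar R_{1:t}]\le(1-\beta)^t$ for all $t\le T$, and $$\Pr_{x\sim D}\big[\exists z\in\mathcal{U}(x):\ \mathrm{CAS}(h_1,\dots,h_T)(z)\neq c(x)\big]\le\frac{\epsilon'}{\beta}+(1-\beta)^T.$$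
   Context: A perturbation set is a map $\mathcal{U}:\mathcal{X}\to 2^{\mathcal{X}}$. For $z\in\mathcal{X}$ let $\mathcal{U}^{-1}(z)=\{x\in\mathcal{X}: z\in\mathcal{U}(x)\}$, and let $\mathcal{U}^{-1}(\mathcal{U})$ denote the perturbation set $\mathcal{U}^{-1}(\mathcal{U})(x)=\bigcup_{z\in\mathcal{U}(x)}\mathcal{U}^{-1}(z)$. For a classifier $h$ and perturbation set $\mathcal{V}$, $\mathrm{Rob}_{\mathcal{V}}(h)=\{x\in\mathcal{X}:\forall z\in\mathcal{V}(x),\ h(z)=h(x)\}$. Selective classifier: for $h:\mathcal{X}\to\mathcal{Y}$, $G_h(z)=y$ if $\mathcal{U}^{-1}(z)\neq\emptyset$ and $h(\tilde x)=y$ for all $\tilde x\in\mathcal{U}^{-1}(z)$, and $G_h(z)=\perp$ otherwise. Cascade: $\mathrm{CAS}(h_1,\dots,h_T)(z)=G_{h_s}(z)$ where $s=\min\{t\le T: G_{h_t}(z)\neq\perp\}$; if no such $t$ exists, it outputs a fixed arbitrary label. All events are assumed measurable. *)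

From HB Require Import structures.
From mathcomp Require Import all_boot all_order all_algebra.
From mathcomp Require Import all_classical all_reals all_analysis.
Set Implicit Arguments. Unset Strict Implicit. Unset Printing Implicit Defensive.
Import Order.TTheory GRing.Theory Num.Theory.
Local Open Scope classical_set_scope.
Local Open Scope ring_scope.

Section Defs.
Context {X Y : Type}.

Definition Uinv (U : X -> set X) (z : X) : set X := [set x | U x z].

Definition UinvU (U : X -> set X) : X -> set X :=
  fun x => \bigcup_(z in U x) Uinv U z.

Definition Rob (V : X -> set X) (h : X -> Y) : set X :=
  [set x | forall z, V x z -> h z = h x].

(* Selective classifier G_h : None plays the role of \perp *)
Definition selective (U : X -> set X) (h : X -> Y) (z : X) : option Y :=
  match pselect (exists y : Y, Uinv U z !=set0 /\ forall x, Uinv U z x -> h x = y) with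
  | left P => Some (projT1 (cid P))
  | right _ => None
  end.

Fixpoint cascade_aux (U : X -> set X) (hs : seq (X -> Y)) (z : X) : option Y :=
  match hs with
  | [::] => None
  | h :: hs' => match selective U h z with
                | Some y => Some y
                | None => cascade_aux U hs' z
                end
  end.

(* CAS(h_1,...,h_T); y0 is the fixed arbitrary default label *)
Definition CAS (U : X -> set X) (h : nat -> X -> Y) (T : nat) (y0 : Y) (z : X) : Y :=
  odflt y0 (cascade_aux U [seq h t | t <- iota 1 T] z).

Definition Rset (U : X -> set X) (h : nat -> X -> Y) (t : nat) : set X :=
  Rob (UinvU U) (h t).

Definition Rbar (U : X -> set X) (h : nat -> X -> Y) (t : nat) : set X :=
  [set x | forall s, (1 <= s <= t)%N -> ~ Rset U h s x].
End Defs.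

Section Prob.
Context {d : measure_display} {X : measurableType d} {R : realType}.
Definition Pr (P : probability X R) (A : set X) : R := fine (P A).
Definition condPr (P : probability X R) (A B : set X) : R :=
  Pr P (A `&` B) / Pr P B.
End Prob.

From HB Require Import structures.
From mathcomp Require Import all_boot all_order all_algebra.
From mathcomp Require Import all_classical all_reals all_analysis.
From mathcomp Require Import ring lra.
Set Implicit Arguments. Unset Strict Implicit. Unset Printing Implicit Defensive.
Import Order.TTheory GRing.Theory Num.Theory.
Local Open Scope classical_set_scope.
Local Open Scope ring_scope.

(* If z is in U(x) then x is in U^{-1}(z), so a stage that does not abstain on
   z outputs h_s(x), and a stage that abstains on z has x outside R_s.  Hence
   the cascade can only be wrong at z when x lies in \bar R_{1:T}, or when some
   stage s is reached (x in \bar R_{1:s-1}) and h_s errs at x.  The conditional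
   hypotheses make \bar R_{1:t} shrink geometrically, so the second event has
   probability at most the sum of eps' (1 - beta)^{s-1}, i.e. at most
   eps' / beta. *)

Section Selective.
Context {X Y : Type} (U : X -> set X) (g : X -> Y).

Lemma selective_Some x z y : U x z -> selective U g z = Some y -> y = g x.
Proof.
move=> Uxz; rewrite /selective; case: pselect => // P [<-].
by case: (cid P) => /= y' [_ ->].
Qed.

Lemma selective_None x z :
  U x z -> selective U g z = None -> ~ Rob (UinvU U) g x.
Proof.
move=> Uxz; rewrite /selective; case: pselect => // noP _ robx; apply: noP.
exists (g x); split; first by exists x.
by move=> x' Ux'z; apply: robx; exists z.
Qed.

End Selective.

Section Cascade.
Context {X Y : Type} (U : X -> set X) (h : nat -> X -> Y).

Lemma Rbar0 : Rbar U h 0 = setT.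
Proof. by apply/seteqP; split=> x //= _ s /andP[/leq_trans le /le]. Qed.

Lemma RbarS t : Rbar U h t.+1 = Rbar U h t `\` Rset U h t.+1.
Proof.
apply/seteqP; split=> x /=.
- move=> notR; split; last by apply: notR; rewrite /= leqnn.
  by move=> s /andP[s1 st]; apply: notR; rewrite s1 /= (leq_trans st).
- move=> [notR notRt] s /andP[s1]; rewrite leq_eqVlt => /orP[/eqP-> //|].
  by rewrite ltnS => st; apply: notR; rewrite s1.
Qed.

Lemma cascade_aux_iota x z k n : U x z -> Rbar U h k x ->
  (exists2 s, (k < s <= k + n)%N &
     Rbar U h s.-1 x /\ cascade_aux U [seq h t | t <- iota k.+1 n] z = Some (h s x))
  \/ Rbar U h (k + n) x.
Proof.
move=> Uxz; elim: n k => [|n IH] k Rk; first by right; rewrite addn0.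
rewrite /=; case sel: (selective U (h k.+1) z) => [y|].
  left; exists k.+1; first by rewrite ltnSn addnS ltnS leq_addr.
  by rewrite (selective_Some Uxz sel).
have Rk1 : Rbar U h k.+1 x by rewrite RbarS; split=> //; exact: selective_None sel.
case: (IH k.+1 Rk1) => [[s /andP[ks sn] sel_s]|RkSn]; last by right; rewrite -addSnnS.
by left; exists s => //; rewrite (ltnW ks) -addSnnS.
Qed.

Lemma CAS_cases T y0 x z : U x z ->
  (exists2 s, (1 <= s <= T)%N & Rbar U h s.-1 x /\ CAS U h T y0 z = h s x)
  \/ Rbar U h T x.
Proof.
move=> Uxz; have R0 : Rbar U h 0 x by rewrite Rbar0.
case: (cascade_aux_iota T Uxz R0) => [[s sT [Rs cas]]|RT]; last by right.
by left; exists s => //; rewrite /CAS cas.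
Qed.

Variable c : X -> Y.

Definition cascade_err (n : nat) : set X :=
  [set x | exists2 s, (1 <= s <= n)%N & Rbar U h s.-1 x /\ h s x <> c x].

Lemma cascade_err0 : cascade_err 0 = set0.
Proof. by apply/seteqP; split=> x //= [s /andP[/leq_trans le /le]]. Qed.

Lemma cascade_errS n :
  cascade_err n.+1 = cascade_err n `|` (Rbar U h n `&` [set x | h n.+1 x <> c x]).
Proof.
apply/seteqP; split=> x /=.
- move=> [s /andP[s1]]; rewrite leq_eqVlt => /orP[/eqP-> | ]; first by right.
  by rewrite ltnS => sn err; left; exists s; rewrite ?s1.
- case=> [[s /andP[s1 sn] err]|[Rn err]]; last by exists n.+1; rewrite /= ?leqnn.
  by exists s; rewrite ?s1 ?(leq_trans sn).
Qed.

Lemma CAS_err_sub T y0 :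
  [set x | exists2 z, U x z & CAS U h T y0 z <> c x] `<=` Rbar U h T `|` cascade_err T.
Proof.
move=> x [z Uxz err]; case: (CAS_cases T y0 Uxz) => [[s sT [Rs cas]]|RT]; last by left.
by right; exists s => //; split; rewrite -?cas.
Qed.

End Cascade.

Section Probability.
Context {d : measure_display} {X : measurableType d} {R : realType}.
Variable P : probability X R.

Lemma Pr_ge0 A : 0 <= Pr P A.
Proof. exact/fine_ge0/measure_ge0. Qed.

Lemma Pr_le1 A : measurable A -> Pr P A <= 1.
Proof.
by move=> mA; rewrite /Pr -lee_fin fineK ?fin_num_measure ?probability_le1.
Qed.

Lemma le_Pr A B : measurable A -> measurable B -> A `<=` B -> Pr P A <= Pr P B.
Proof.
move=> mA mB AB; rewrite /Pr -lee_fin !fineK ?fin_num_measure //.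
by apply: le_measure; rewrite ?inE.
Qed.

Lemma Pr_setU_le A B :
  measurable A -> measurable B -> Pr P (A `|` B) <= Pr P A + Pr P B.
Proof.
move=> mA mB; rewrite /Pr -lee_fin EFinD !fineK ?fin_num_measure //.
  exact: measureU2.
exact: measurableU.
Qed.

Lemma Pr_setDI A B :
  measurable A -> measurable B -> Pr P A = Pr P (A `\` B) + Pr P (A `&` B).
Proof.
move=> mA mB; apply: EFin_inj; rewrite EFinD /Pr !fineK ?fin_num_measure //.
- exact: measureDI.
- exact: measurableI.
- exact: measurableD.
Qed.

Lemma Pr_sub_eq0 A B : measurable A -> measurable B -> A `<=` B ->
  ~ 0 < Pr P B -> Pr P A = 0.
Proof.
move=> mA mB AB /negP; rewrite -leNgt => PB0.
by apply/eqP; rewrite eq_le Pr_ge0 andbT (le_trans (le_Pr mA mB AB)).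
Qed.

Lemma Pr_setI_le e A B : measurable A -> measurable B ->
  (0 < Pr P A -> condPr P B A <= e) -> Pr P (A `&` B) <= e * Pr P A.
Proof.
move=> mA mB cond; have [PA0|/negP PA0] := boolP (0 < Pr P A).
  by move: (cond PA0); rewrite /condPr ler_pdivrMr // setIC.
have PAB0 := Pr_sub_eq0 (measurableI _ _ mA mB) mA (@subIsetl _ A B) PA0.
by rewrite PAB0 (Pr_sub_eq0 mA mA (@subset_refl _ A) PA0) mulr0.
Qed.

Lemma Pr_setD_le beta A B : measurable A -> measurable B ->
  (0 < Pr P A -> beta <= condPr P B A) -> Pr P (A `\` B) <= (1 - beta) * Pr P A.
Proof.
move=> mA mB cond; have [PA0|/negP PA0] := boolP (0 < Pr P A).
  have : beta * Pr P A <= Pr P (A `&` B).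
    by move: (cond PA0); rewrite /condPr ler_pdivlMr // setIC.
  by have := Pr_setDI mA mB; lra.
have PAB0 := Pr_sub_eq0 (measurableD mA mB) mA (@subDsetl _ A B) PA0.
by rewrite PAB0 (Pr_sub_eq0 mA mA (@subset_refl _ A) PA0) mulr0.
Qed.

End Probability.

Section Bounds.
Context {d : measure_display} {X : measurableType d} {Y : Type} {R : realType}.
Variables (U : X -> set X) (h : nat -> X -> Y) (c : X -> Y) (P : probability X R).
Variables (beta eps' : R) (T : nat).
Hypotheses (beta_gt0 : 0 < beta) (beta_le1 : beta <= 1).
Hypothesis mR : forall t, measurable (Rset U h t).
Hypothesis merr : forall t, measurable [set x | h t x <> c x].

Lemma measurable_Rbar t : measurable (Rbar U h t).
Proof.
elim: t => [|t IH]; first by rewrite Rbar0.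
by rewrite RbarS; apply: measurableD.
Qed.

Lemma measurable_cascade_err n : measurable (cascade_err U h c n).
Proof.
elim: n => [|n IH]; first by rewrite cascade_err0.
by rewrite cascade_errS; apply: measurableU => //; apply: measurableI (measurable_Rbar n) _.
Qed.

Lemma Pr_Rbar_le :
  (forall t, (t < T)%N -> 0 < Pr P (Rbar U h t) ->
     beta <= condPr P (Rset U h t.+1) (Rbar U h t)) ->
  forall t, (t <= T)%N -> Pr P (Rbar U h t) <= (1 - beta) ^+ t.
Proof.
move=> robust; elim=> [|t IH] tT; first by rewrite expr0; apply/Pr_le1/measurable_Rbar.
rewrite RbarS exprS.
apply: le_trans (Pr_setD_le (measurable_Rbar t) (mR t.+1) (robust t tT)) _.
by apply: ler_wpM2l; [rewrite subr_ge0 | apply/IH/ltnW].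
Qed.

Lemma Pr_cascade_err_le :
  (forall t, (t < T)%N -> 0 < Pr P (Rbar U h t) ->
     condPr P [set x | h t.+1 x <> c x] (Rbar U h t) <= eps') ->
  (forall t, (t <= T)%N -> Pr P (Rbar U h t) <= (1 - beta) ^+ t) ->
  0 <= eps' ->
  forall n, (n <= T)%N -> Pr P (cascade_err U h c n) <= eps' * (1 - (1 - beta) ^+ n) / beta.
Proof.
move=> accurate decay eps'_ge0; elim=> [|n IH] nT.
  by rewrite cascade_err0 expr0 subrr mulr0 mul0r /Pr measure0.
have stage_n : Pr P (Rbar U h n `&` [set x | h n.+1 x <> c x]) <= eps' * (1 - beta) ^+ n.
  apply: le_trans (Pr_setI_le (measurable_Rbar n) (merr n.+1) (accurate n nT)) _.
  by apply: ler_wpM2l => //; apply/decay/ltnW.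
have mstage := measurableI _ _ (measurable_Rbar n) (merr n.+1).
rewrite cascade_errS; apply: le_trans (Pr_setU_le P (measurable_cascade_err n) mstage) _.
have -> : eps' * (1 - (1 - beta) ^+ n.+1) / beta =
          eps' * (1 - (1 - beta) ^+ n) / beta + eps' * (1 - beta) ^+ n.
  by rewrite exprS; field; rewrite gt_eqF.
by apply: lerD => //; apply/IH/ltnW.
Qed.

End Bounds.

Theorem mainTheorem4 (d : measure_display) (X : measurableType d) (Y : Type)
  (R : realType) (U : X -> set X) (c : X -> Y) (D : probability X R)
  (beta eps' : R) (h : nat -> X -> Y) (T : nat) (y0 : Y) :
  0 < beta -> beta <= 1 -> 0 <= eps' ->
  (* all events are measurable *)
  (forall t, measurable (Rset U h t)) ->
  (forall t, measurable [set x | h t x <> c x]) ->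
  measurable [set x | exists2 z, U x z & CAS U h T y0 z <> c x] ->
  (forall t, (1 <= t <= T)%N -> 0 < Pr D (Rbar U h t.-1) ->
     beta <= condPr D (Rset U h t) (Rbar U h t.-1) /\
     condPr D [set x | h t x <> c x] (Rbar U h t.-1) <= eps') ->
  (forall t, (t <= T)%N -> Pr D (Rbar U h t) <= (1 - beta) ^+ t) /\
  Pr D [set x | exists2 z, U x z & CAS U h T y0 z <> c x]
    <= eps' / beta + (1 - beta) ^+ T.
Proof.
move=> beta_gt0 beta_le1 eps'_ge0 mR merr mCAS stage.
have decay := Pr_Rbar_le beta_le1 mR (fun t tT pos => (stage t.+1 tT pos).1).
have err := Pr_cascade_err_le beta_gt0 mR merr
  (fun t tT pos => (stage t.+1 tT pos).2) decay eps'_ge0.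
split=> //.
have mRT := measurable_Rbar mR T; have mErrT := measurable_cascade_err mR merr T.
apply: le_trans (le_Pr D mCAS (measurableU _ _ mRT mErrT) (@CAS_err_sub _ _ U h c T y0)) _.
apply: le_trans (Pr_setU_le D mRT mErrT) _; rewrite addrC lerD ?decay //.
apply: le_trans (err T (leqnn T)) _; rewrite ler_pdivrMr // divfK ?gt_eqF //.
by apply: ler_piMr => //; rewrite gerBl exprn_ge0 // subr_ge0.
Qed.
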